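(* Let $d\ge2$, $n\ge1$, $\gamma$ a positive conductivity on the lattice graph below, and $d-1\le t\le dn-1$. Then $\ker T_1^{(t)}=\ker T^{(t)}$.
   Context: Lattice: $D=\{x\in\mathbb Z^d:1\le x_i\le n\ \forall i\}$, $\partial D=\{p\in\mathbb Z^d:\min_{q\in D}\|q-p\|_{\ell^1}=1\}$; $E$ = unordered pairs $pq\subseteq D\cup\partial D$ with $\|p-q\|_{\ell^1}=1$, not both in $\partial D$; $\mathcal N(p)=\{q:pq\in E\}$; each $b\in\partial D$ has a unique neighbour $q_b\in D$. Conductivity $\gamma:E\to(0,\infty)$, symmetric. $S_\gamma\varphi$ is the unique $\mathbf u\in\mathbb R^{D\cup\partial D}$ with $\sum_{q\in\mathcal N(p)}\gamma_{pq}(\mathbf u_q-\mathbf u_p)=0$ for all $p\in D$, $\mathbf u=\varphi$ on $\partial D$; $\Lambda_\gamma\varphi=(\gamma_{bq_b}(\mathbf u_{q_b}-\mathbf u_b))_{b\in\partial D}$ with $\mathbf u=S_\gamma\varphi$ (the DtN matrix). Functions on subsets are extended by zero. With $s(x)=\sum_ix_i$: $L_t=\{x\in D:s(x)=t\}$, $K_t^+=\{x\in\partial D:s(x)=t,\max_ix_i=n+1\}$, $K_t^-=\{x\in\partial D:s(x)=t,\min_ix_i=0\}$, $K_t^{\mathcal S\pm}=\bigcup_{\ell\le t}K_\ell^\pm$, $J_t^{\mathcal S}=K_t^{\mathcal S-}\cup K_{t+1}^{\mathcal S+}$. $T^{(t)}:\mathbb R^{J_t^{\mathcal S}}\to\mathbb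 R^{\partial D\setminus J_t^{\mathcal S}}$, $\varphi\mapsto(\Lambda_\gamma\varphi)|_{\partial D\setminus J_t^{\mathcal S}}$ (the submatrix $\Lambda_\gamma(\partial D\setminus J_t^{\mathcal S};J_t^{\mathcal S})$); $T_1^{(t)}:\mathbb R^{J_t^{\mathcal S}}\to\mathbb R^{L_{t+1}}$, $\varphi\mapsto(S_\gamma\varphi)|_{L_{t+1}}$. *)

From mathcomp Require Import all_boot all_order all_algebra.
From Stdlib Require Import ClassicalEpsilon.
Set Implicit Arguments. Unset Strict Implicit. Unset Printing Implicit Defensive.
Import Order.TTheory GRing.Theory Num.Theory.

(* Points of the box {0,...,n+1}^d in Z^d; this box contains D and dD. *)
Definition pt (d n : nat) := {ffun 'I_d -> 'I_n.+2}.

Section Lattice.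
Variables (d n : nat).
Local Notation V := (pt d n).

Definition l1dist (p q : V) : nat := \sum_(i < d) ((p i - q i) + (q i - p i))%N.

Definition inD (p : V) : bool := [forall i, (0 < p i)%N && (p i <= n)%N].

Definition inB (p : V) : bool := ~~ inD p && [exists q, inD q && (l1dist p q == 1)%N].

Definition adj (p q : V) : bool :=
  (l1dist p q == 1)%N && (inD p || inB p) && (inD q || inB q) && ~~ (inB p && inB q).

Definition ssum (x : V) : nat := \sum_(i < d) (x i : nat).

Definition inL (t : nat) (x : V) : bool := inD x && (ssum x == t).
Definition inKp (t : nat) (x : V) : bool :=
  [&& inB x, ssum x == t & (\max_(i < d) (x i : nat)) == n.+1].
Definition inKm (t : nat) (x : V) : bool :=
  [&& inB x, ssum x == t & [exists i, (x i : nat) == 0%N]].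
Definition inKSp (t : nat) (x : V) : bool := [exists l : 'I_t.+1, inKp l x].
Definition inKSm (t : nat) (x : V) : bool := [exists l : 'I_t.+1, inKm l x].
Definition inJ (t : nat) (x : V) : bool := inKSm t x || inKSp t.+1 x.

Variable R : realFieldType.
Local Open Scope ring_scope.

(* u solves the Dirichlet problem with boundary data phi
   (u lives on D u dD; it is set to 0 on the remaining box points) *)
Definition dirichlet_sol (g : V -> V -> R) (phi u : V -> R) : Prop :=
  (forall p, inD p -> \sum_(q | adj p q) g p q * (u q - u p) = 0) /\
  (forall b, inB b -> u b = phi b) /\
  (forall p, ~~ inD p -> ~~ inB p -> u p = 0).

(* S_gamma phi := the (unique) solution of the Dirichlet problem *)
Definition Sg (g : V -> V -> R) (phi : V -> R) : V -> R :=
  epsilon (inhabits (fun _ => 0)) (fun u => dirichlet_sol g phi u).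

Definition qnb (b : V) : option V := [pick q | adj b q && inD q].

Definition DtN (g : V -> V -> R) (phi : V -> R) (b : V) : R :=
  let u := Sg g phi in
  match qnb b with Some q => g b q * (u q - u b) | None => 0 end.

(* phi in R^{J_t^S} (extended by zero) *)
Definition onJ (t : nat) (phi : V -> R) : Prop := forall x, ~~ inJ t x -> phi x = 0.

Definition in_ker_T (g : V -> V -> R) (t : nat) (phi : V -> R) : Prop :=
  onJ t phi /\ forall b, inB b -> ~~ inJ t b -> DtN g phi b = 0.

Definition in_ker_T1 (g : V -> V -> R) (t : nat) (phi : V -> R) : Prop :=
  onJ t phi /\ forall x, inL t.+1 x -> Sg g phi x = 0.

End Lattice.

From mathcomp Require Import all_boot all_order all_algebra.
From mathcomp Require Import ring zify.
From HB Require Import structures.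
From Stdlib Require Import ClassicalEpsilon.
Import Order.TTheory GRing.Theory Num.Theory.
Set Implicit Arguments. Unset Strict Implicit. Unset Printing Implicit Defensive.

(* Let u = S_γ φ with φ supported on J_t.  A boundary point outside J_t touches D only at a
   point of level s ≥ t+1, and every boundary neighbour of a point of level ≥ t+2 lies
   outside J_t.

   If u vanishes on L_{t+1}, the maximum principle on the region {s ≥ t+2} of D forces u = 0
   there, so for b ∉ J_t both u(b) and u(q_b) vanish and so does the DtN data at b.

   Conversely, if both the Dirichlet and the Neumann data vanish off J_t, u = 0 propagates
   downwards from the top faces by unique continuation: at a point q of level > t, either
   q + e_i is a boundary point outside J_t (when q_i = n), or u vanishes at q + e_i ∈ D and at
   all its neighbours except q, and harmonicity at q + e_i gives u(q) = 0.  The induction runs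
   along decreasing level, then decreasing i-th coordinate. *)

Section LatticeGeometry.
Variables (d n : nat).
Local Notation V := (pt d n).

Definition shift (p : V) (i : 'I_d) (k : nat) : V :=
  [ffun j => if j == i then inord k else p j].

Lemma shiftE (p : V) i k j : (k <= n.+1)%N ->
  (shift p i k j : nat) = if j == i then k else p j.
Proof. by move=> hk; rewrite ffunE; case: eqP => // _; rewrite inordK. Qed.

Lemma ssum_shift (p : V) i k : (k <= n.+1)%N ->
  (ssum (shift p i k) + p i = ssum p + k)%N.
Proof.
move=> hk; rewrite /ssum (bigD1 i) //= [in RHS](bigD1 i) //= shiftE // eqxx.
under eq_bigr => j ji do rewrite shiftE // (negbTE ji).
lia.
Qed.

Lemma ssum_le (q : V) : (ssum q <= d * n.+1)%N.
Proof.
rewrite -[X in (_ <= X * _)%N]card_ord -sum_nat_const.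
by apply: leq_sum => i _; rewrite -ltnS.
Qed.

Lemma l1distC (p q : V) : l1dist p q = l1dist q p.
Proof. by apply: eq_bigr => i _; rewrite addnC. Qed.

Lemma l1dist_eq1 (p q : V) : l1dist p q = 1%N ->
  exists i, (forall j, j != i -> q j = p j) /\
            ((q i : nat) = (p i).+1 \/ (q i).+1 = p i)%N.
Proof.
rewrite /l1dist => h.
have [i hi|all0] := pickP (fun i => (0 < (p i - q i) + (q i - p i))%N); last first.
  by move: h; rewrite big1 // => j _; move/negbT: (all0 j); rewrite -eqn0Ngt => /eqP.
move: h; rewrite (bigD1 i) //=; set rest := (\sum_(j | _) _)%N => h.
have rest0 : rest = 0%N by move: hi h; set a := (p i : nat); set b := (q i : nat); lia.
exists i; split; last by move: hi h; set a := (p i : nat); set b := (q i : nat); lia.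
move=> j ji; apply/val_inj/eqP; rewrite eqn_leq.
move/eqP: rest0; rewrite sum_nat_eq0 => /forall_inP /(_ j ji).
by rewrite addn_eq0 !subn_eq0 => /andP[-> ->].
Qed.

Lemma l1dist_shift (p : V) i k : (k <= n.+1)%N -> ((p i : nat) = k.+1 \/ k = (p i).+1) ->
  l1dist p (shift p i k) = 1%N.
Proof.
move=> hk hpk; rewrite /l1dist (bigD1 i) //= big1 => [|j ji]; rewrite !shiftE //.
  by rewrite eqxx; lia.
by rewrite (negbTE ji) subnn.
Qed.

Lemma inDP (p : V) : reflect (forall i, 0 < p i <= n)%N (inD p).
Proof. exact: forallP. Qed.

Lemma not_inD_coord (b : V) : ~~ inD b ->
  exists i, (b i : nat) = 0%N \/ (b i : nat) = n.+1.
Proof.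
move/inDP => nD; have [i hi|all_in] := pickP (fun i => ~~ (0 < b i <= n)%N).
  by exists i; have := ltn_ord (b i); lia.
by case: nD => i; move: (all_in i) => /negbFE.
Qed.

Lemma adjC (p q : V) : adj p q = adj q p.
Proof.
by rewrite /adj l1distC; case: (l1dist q p == 1)%N;
  case: (inD p); case: (inD q); case: (inB p); case: (inB q).
Qed.

Lemma adj_shift (p : V) i k : inD p -> (k <= n.+1)%N ->
  ((p i : nat) = k.+1 \/ k = (p i).+1) -> adj p (shift p i k).
Proof.
move=> Dp hk hpk; rewrite /adj l1dist_shift // Dp /= /inB Dp /= andbT.
case: (inD _) => //=; apply/existsP; exists p.
by rewrite Dp l1distC l1dist_shift.
Qed.

Lemma adj_notD_inB (p q : V) : adj p q -> ~~ inD q -> inB q.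
Proof. by case/andP=> /andP[_ /orP[->|->]]. Qed.

Lemma adj_step (p r : V) : adj p r -> exists j, (forall k, k != j -> r k = p k) /\
  (((r j : nat) = (p j).+1 /\ ssum r = (ssum p).+1) \/
   ((r j).+1 = p j /\ (ssum r).+1 = ssum p))%N.
Proof.
case/andP=> /andP[/andP[/eqP/l1dist_eq1[j [offj hj]] _] _] _.
exists j; split => //.
have E : (ssum r + p j = ssum p + r j)%N.
  have rj : (r j <= n.+1)%N by rewrite -ltnS.
  have Er : shift p j (r j) = r.
    apply/ffunP => k; apply/val_inj; rewrite /= shiftE //.
    by case: eqVneq => [->|/offj ->].
  by rewrite -{1}Er ssum_shift.
lia.
Qed.

Lemma inB_adj_inD (b : V) : inB b -> exists q, adj b q /\ inD q.
Proof.
move=> Bb; have /andP[_ /existsP[q /andP[Dq /eqP bq]]] := Bb.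
by exists q; rewrite /adj bq eqxx Bb Dq !orbT /= /inB Dq.
Qed.

Lemma adj_inD_unique (b q q' : V) : ~~ inD b ->
  adj b q -> inD q -> adj b q' -> inD q' -> q = q'.
Proof.
move=> nDb; have [i bi] := not_inD_coord nDb.
have step_at_i r : adj b r -> inD r ->
    (forall k, k != i -> r k = b k) /\ (r i : nat) = (if b i == 0 :> nat then 1 else n)%N.
  move=> abr /inDP Dr; have [j [offj hj]] := adj_step abr.
  have ji : j = i.
    by apply/eqP; apply: contraT => /eqP/nesym/eqP/offj rb; have := Dr i; rewrite rb; lia.
  by subst j; split => //; have := Dr i; case: eqP; lia.
move=> abq Dq abq' Dq'.
have [offq qi] := step_at_i q abq Dq; have [offq' q'i] := step_at_i q' abq' Dq'.
apply/ffunP => k; case: (eqVneq k i) => [->|ki]; last by rewrite offq // offq'.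
by apply/val_inj; rewrite /= qi q'i.
Qed.

Lemma qnb_adj (b q : V) : ~~ inD b -> adj b q -> inD q -> qnb b = Some q.
Proof.
move=> nDb abq Dq; rewrite /qnb; case: pickP => [q' /andP[abq' Dq']|none].
  by rewrite (adj_inD_unique nDb abq' Dq' abq Dq).
by move: (none q); rewrite abq Dq.
Qed.

End LatticeGeometry.

Section Potential.
Variables (d n : nat).
Local Notation V := (pt d n).

Definition potential (i : 'I_d) (q : V) : nat :=
  ((d * n.+1 - ssum q) * n.+2 + (n.+1 - q i))%N.

Lemma potential_lt_ssum i (q r : V) : (ssum q < ssum r)%N -> (potential i r < potential i q)%N.
Proof.
move=> qr; have := ssum_le r; have := ltn_ord (r i); rewrite /potential => ri sr.
have gap : ((d * n.+1 - ssum r).+1 <= d * n.+1 - ssum q)%N by lia.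
have := leq_mul gap (leqnn n.+2); rewrite mulSn; lia.
Qed.

Lemma potential_lt_coord i (q r : V) : ssum q = ssum r -> (q i < r i)%N ->
  (potential i r < potential i q)%N.
Proof. by rewrite /potential => -> qr; rewrite ltn_add2l; have := ltn_ord (r i); lia. Qed.

End Potential.

Section BoundaryLevels.
Variables (d n t : nat).
Local Notation V := (pt d n).

Lemma inJ_zero_coord (b : V) i : inB b -> (b i : nat) = 0%N -> (ssum b <= t)%N -> inJ t b.
Proof.
move=> Bb bi sb; apply/orP; left; apply/existsP; exists (Ordinal (sb : ssum b < t.+1)%N).
by rewrite /inKm Bb eqxx; apply/existsP; exists i; rewrite bi.
Qed.

Lemma inJ_top_coord (b : V) i : inB b -> (b i : nat) = n.+1 -> (ssum b <= t.+1)%N -> inJ t b.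
Proof.
move=> Bb bi sb; apply/orP; right; apply/existsP; exists (Ordinal (sb : ssum b < t.+2)%N).
rewrite /inKp Bb eqxx /= eqn_leq; apply/andP; split.
  by apply/bigmax_leqP => j _; rewrite -ltnS.
by have := leq_bigmax (F := fun j => (b j : nat)) i; rewrite bi.
Qed.

Lemma notin_J (b : V) :
  (t.+1 < ssum b)%N \/ ((t < ssum b)%N /\ forall i, (b i <= n)%N) -> ~~ inJ t b.
Proof.
move=> hb; rewrite negb_or; apply/andP; split; apply/existsP => -[l /and3P[_ /eqP sb mb]];
  have := ltn_ord l; rewrite -sb.
  by case: hb => [|[]]; lia.
case: hb => [|[_ b_le]]; first lia.
have : (\max_(i < d) (b i : nat) <= n)%N by apply/bigmax_leqP => i _; exact: b_le.
by rewrite (eqP mb) ltnn.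
Qed.

Lemma notin_J_adj (p r : V) : inD p -> (t.+1 < ssum p)%N -> adj p r -> ~~ inD r -> ~~ inJ t r.
Proof.
move=> /inDP Dp sp apr _; apply: notin_J.
have [j [offj [[rj sr]|[rj sr]]]] := adj_step apr; [left; lia | right; split; first lia].
move=> k; case: (eqVneq k j) => [->|kj]; last by rewrite offj //; have := Dp k; lia.
by have := Dp j; lia.
Qed.

Lemma adj_notin_J_ssum (b q : V) : inB b -> ~~ inJ t b -> adj b q -> inD q ->
  (t < ssum q)%N.
Proof.
move=> Bb nJb; rewrite adjC => aqb /inDP Dq.
have [j [offj hj]] := adj_step aqb.
have nDb : ~~ inD b by case/andP: Bb.
have bj_out : ~~ (0 < b j <= n)%N.
  apply: contra nDb => bj; apply/inDP => k.
  by case: (eqVneq k j) => [->//|kj]; rewrite offj.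
have := Dq j; case: hj => [[bj sb]|[bj sb]] qj.
- have bj_top : (b j : nat) = n.+1 by lia.
  by have := contra (inJ_top_coord Bb bj_top) nJb; lia.
- have bj0 : (b j : nat) = 0%N by lia.
  by have := contra (inJ_zero_coord Bb bj0) nJb; lia.
Qed.

End BoundaryLevels.

Section Harmonic.
Variables (d n : nat) (R : realFieldType) (g : pt d n -> pt d n -> R).
Local Notation V := (pt d n).
Local Open Scope ring_scope.
Hypothesis gpos : forall p q : V, adj p q -> 0 < g p q.

Definition harmonic_at (u : V -> R) (p : V) : Prop :=
  \sum_(q | adj p q) g p q * (u q - u p) = 0.

Lemma harmonic_atN (u : V -> R) p : harmonic_at u p -> harmonic_at (fun x => - u x) p.
Proof.
rewrite /harmonic_at => hu; rewrite (eq_bigr (fun q => - (g p q * (u q - u p)))).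
  by rewrite sumrN hu oppr0.
by move=> q _; rewrite -mulrN opprB addrC opprK.
Qed.

Lemma harmonic_max_neighbours (u : V -> R) p : harmonic_at u p ->
  (forall r, adj p r -> u r <= u p) -> forall r, adj p r -> u r = u p.
Proof.
move=> hu le_p r apr.
have nonneg r' : adj p r' -> 0 <= g p r' * (u p - u r').
  by move=> apr'; rewrite mulr_ge0 ?subr_ge0 ?le_p ?ltW ?gpos.
have sum0 : \sum_(r' | adj p r') g p r' * (u p - u r') = 0.
  rewrite (eq_bigr (fun r' => - (g p r' * (u r' - u p)))) ?sumrN ?hu ?oppr0 //.
  by move=> r' _; rewrite -mulrN opprB.
have /eqP := psumr_eq0P nonneg sum0 apr.
by rewrite mulf_eq0 (gt_eqF (gpos apr)) subr_eq0 => /eqP.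
Qed.

Lemma harmonic_zero_neighbour (u : V -> R) p q : harmonic_at u p -> adj p q -> u p = 0 ->
  (forall r, adj p r -> r != q -> u r = 0) -> u q = 0.
Proof.
move=> hu apq up0 others; move: hu.
rewrite /harmonic_at (bigD1 q apq) /= big1 => [|r /andP[apr rq]]; last first.
  by rewrite others // up0 subrr mulr0.
by rewrite addr0 up0 subr0 => /eqP; rewrite mulf_eq0 (gt_eqF (gpos apq)) => /eqP.
Qed.

Lemma DtNE (phi : V -> R) b q : ~~ inD b -> adj b q -> inD q ->
  DtN g phi b = g b q * (Sg g phi q - Sg g phi b).
Proof. by move=> nDb abq Dq; rewrite /DtN (qnb_adj nDb abq Dq). Qed.

Hypothesis d_gt0 : (0 < d)%N.

Lemma maximum_principle (W : pred V) (u : V -> R) :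
  {subset W <= @inD d n} -> {in W, forall p, harmonic_at u p} ->
  (forall p q, W p -> adj p q -> ~~ W q -> u q <= 0) -> {in W, forall p, u p <= 0}.
Proof.
move=> WD hu out p0 Wp0; rewrite leNgt; apply/negP => up0.
pose i0 := Ordinal d_gt0.
have [m Wm max_m] := arg_maxP u Wp0.
have um : 0 < u m := lt_le_trans up0 (max_m _ Wp0).
(* a maximiser with minimal [i0]-th coordinate: its lower neighbour is again a maximiser in W *)
case: (@arg_minnP _ m (fun x => W x && (u x == u m)) (fun x : V => (x i0 : nat))).
  by apply/andP; split.
move=> p /andP[Wp /eqP upm] min_p.
have max_p r : adj p r -> u r <= u p.
  move=> apr; rewrite upm; have [Wr|nWr] := boolP (W r); first exact: max_m.
  exact: le_trans (out _ _ Wp apr nWr) (ltW um).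
have /inDP/(_ i0)/andP[pi0_gt0 _] := WD p Wp.
have pi0_le : ((p i0).-1 <= n.+1)%N by apply: leq_trans (leq_pred _) _; rewrite -ltnS.
pose q := shift p i0 (p i0).-1.
have apq : adj p q by apply: adj_shift => //; [exact: WD | left; rewrite prednK].
have uq := harmonic_max_neighbours (hu p Wp) max_p apq.
have Wq : W q.
  by apply: contraT => nWq; have := out _ _ Wp apq nWq; rewrite uq upm leNgt um.
have := min_p q; rewrite Wq uq upm eqxx => /(_ isT).
by rewrite /q shiftE // eqxx leqNgt ltn_predL pi0_gt0.
Qed.

Lemma harmonic_eq0 (W : pred V) (u : V -> R) :
  {subset W <= @inD d n} -> {in W, forall p, harmonic_at u p} ->
  (forall p q, W p -> adj p q -> ~~ W q -> u q = 0) -> {in W, forall p, u p = 0}.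
Proof.
move=> WD hu out p Wp; apply: le_anti; apply/andP; split.
  by apply: (maximum_principle WD hu) Wp => x y Wx axy nWy; rewrite (out x y).
rewrite -oppr_le0; apply: (maximum_principle (u := fun x => - u x) WD) Wp.
  by move=> x Wx; apply/harmonic_atN/hu.
by move=> x y Wx axy nWy; rewrite (out x y) ?oppr0.
Qed.

Definition dirichlet_op (u : {ffun V -> R^o}) : {ffun V -> R^o} :=
  [ffun p => if inD p then \sum_(q | adj p q) g p q * (u q - u p) else u p].

Lemma dirichlet_op_is_linear : linear dirichlet_op.
Proof.
move=> a u v; apply/ffunP => p; rewrite !ffunE; case: ifP => _ //.
rewrite /GRing.scale /= mulr_sumr -big_split; apply: eq_bigr => q _; rewrite !ffunE.
by rewrite /GRing.scale /=; ring.
Qed.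

HB.instance Definition _ :=
  GRing.isLinear.Build R _ _ _ dirichlet_op dirichlet_op_is_linear.

Lemma dirichlet_op_inj : injective dirichlet_op.
Proof.
suff ker0 w : dirichlet_op w = 0 -> w = 0.
  by move=> u v e; apply/eqP; rewrite -subr_eq0; apply/eqP/ker0; rewrite linearB /= e subrr.
move=> w0; have wE p : dirichlet_op w p = 0 by rewrite w0 ffunE.
have off_D p : ~~ inD p -> w p = 0.
  by move=> nDp; have := wE p; rewrite ffunE (negbTE nDp).
apply/ffunP => p; rewrite ffunE; have [Dp|/off_D//] := boolP (inD p).
apply: (harmonic_eq0 (W := @inD d n) (u := fun x => w x)) => // [x Dx|x y _ _ /off_D//].
by have := wE x; rewrite ffunE (_ : inD x).
Qed.

Lemma dirichlet_sol_exists (phi : V -> R) : exists u, dirichlet_sol g phi u.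
Proof.
pose f : 'End({ffun V -> R^o}) := linfun dirichlet_op.
have kf : lker f == 0%VS.
  by apply/lker0P => x y; rewrite !lfunE; exact: dirichlet_op_inj.
pose data : {ffun V -> R^o} := [ffun p => if inD p then 0 else if inB p then phi p else 0].
have solE : dirichlet_op ((f^-1)%VF data) = data by rewrite -[LHS]lfunE lker0_lfunVK.
have solE_at p : dirichlet_op ((f^-1)%VF data) p = data p by rewrite solE.
exists (fun p => (f^-1)%VF data p); split; [|split].
- by move=> p Dp; have := solE_at p; rewrite !ffunE Dp.
- move=> b Bb; have nDb : ~~ inD b by case/andP: Bb.
  by have := solE_at b; rewrite !ffunE (negbTE nDb) Bb.
- by move=> p nDp nBp; have := solE_at p; rewrite !ffunE (negbTE nDp) (negbTE nBp).
Qed.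

Lemma Sg_sol (phi : V -> R) : dirichlet_sol g phi (Sg g phi).
Proof. exact: epsilon_spec (dirichlet_sol_exists phi). Qed.

End Harmonic.

Section Kernels.
Variables (d n : nat) (R : realFieldType) (g : pt d n -> pt d n -> R).
Local Notation V := (pt d n).
Local Open Scope ring_scope.
Hypothesis gpos : forall p q : V, adj p q -> 0 < g p q.
Hypothesis d_gt0 : (0 < d)%N.
Variable t : nat.

Lemma ker_T1_vanish_above (phi : V -> R) : in_ker_T1 g t phi ->
  forall q, inD q -> (t.+1 < ssum q)%N -> Sg g phi q = 0.
Proof.
case=> phiJ vanL; have [harm [bnd _]] := Sg_sol gpos d_gt0 phi => q Dq sq.
apply: (harmonic_eq0 gpos d_gt0 (W := [pred x | inD x && (t.+1 < ssum x)%N]));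
  [by move=> x /andP[] | by move=> x /andP[Dx _]; apply: harm | | by rewrite inE Dq].
move=> x y /andP[Dx sx] axy; rewrite negb_and -leqNgt; have [Dy /= sy|nDy _] := boolP (inD y).
  by apply: vanL; rewrite /inL Dy; have [j [_ [[_ s]|[_ s]]]] := adj_step axy; apply/eqP; lia.
by rewrite (bnd y (adj_notD_inB axy nDy)) (phiJ _ (notin_J_adj Dx sx axy nDy)).
Qed.

Lemma ker_T1_ker_T (phi : V -> R) : in_ker_T1 g t phi -> in_ker_T g t phi.
Proof.
move=> kT1; have [phiJ vanL] := kT1; split => // b Bb nJb.
have [_ [bnd _]] := Sg_sol gpos d_gt0 phi.
have [q [abq Dq]] := inB_adj_inD Bb; have nDb : ~~ inD b by case/andP: Bb.
rewrite (DtNE g phi nDb abq Dq) (bnd b Bb) (phiJ _ nJb) subr0.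
have := adj_notin_J_ssum Bb nJb abq Dq; rewrite leq_eqVlt => /orP[sq|sq].
  by rewrite vanL ?mulr0 // /inL Dq eq_sym.
by rewrite (ker_T1_vanish_above kT1) ?mulr0.
Qed.

Lemma ker_T_vanish_top_face (phi : V -> R) q i : in_ker_T g t phi ->
  inD q -> (t < ssum q)%N -> (q i : nat) = n -> Sg g phi q = 0.
Proof.
case=> phiJ flux Dq sq qi; have [_ [bnd _]] := Sg_sol gpos d_gt0 phi.
pose b := shift q i n.+1.
have aqb : adj q b by apply: adj_shift => //; right; rewrite qi.
have abq : adj b q by rewrite adjC.
have nDb : ~~ inD b by apply/inDP => /(_ i); rewrite shiftE // eqxx ltnn andbF.
have Bb := adj_notD_inB aqb nDb.
have nJb : ~~ inJ t b.
  by apply: notin_J; left; have := ssum_shift q i (leqnn n.+1); rewrite -/b qi; lia.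
have := flux b Bb nJb; rewrite (DtNE g phi nDb abq Dq) (bnd b Bb) (phiJ _ nJb) subr0 => /eqP.
by rewrite mulf_eq0 (gt_eqF (gpos abq)) => /eqP.
Qed.

Lemma ker_T_vanish_interior_step (phi : V -> R) q i : in_ker_T g t phi ->
  inD q -> (t < ssum q)%N -> (q i < n)%N ->
  (forall r, inD r -> (t < ssum r)%N -> (potential i r < potential i q)%N -> Sg g phi r = 0) ->
  Sg g phi q = 0.
Proof.
case=> phiJ _ Dq sq qi IH; have [harm [bnd _]] := Sg_sol gpos d_gt0 phi.
have qi_le : ((q i).+1 <= n.+1)%N by apply: leqW.
pose p := shift q i (q i).+1.
have apq : adj q p by apply: adj_shift => //; right.
have pi : (p i : nat) = (q i).+1 by rewrite shiftE // eqxx.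
have p_off j : j != i -> p j = q j.
  by move=> ji; apply/val_inj; rewrite /= shiftE // (negbTE ji).
have sp : ssum p = (ssum q).+1 by have := ssum_shift q i qi_le; rewrite -/p; lia.
have Dp : inD p.
  apply/inDP => j; have [->|ji] := eqVneq j i; first by rewrite pi.
  by rewrite p_off //; apply/inDP.
have up : Sg g phi p = 0 by apply: IH => //; [lia | apply: potential_lt_ssum; lia].
apply: (harmonic_zero_neighbour gpos (harm p Dp) _ up) => [|r apr rq]; first by rewrite adjC.
have [Dr|nDr] := boolP (inD r); last first.
  by rewrite (bnd r (adj_notD_inB apr nDr)) (phiJ _ (notin_J_adj Dp _ apr nDr)) // sp.
have [j [r_off [[rj sr]|[rj sr]]]] := adj_step apr.
  by apply: IH => //; [lia | apply: potential_lt_ssum; lia].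
have [ji|ji] := eqVneq j i.
  subst j; case/eqP: rq; apply/ffunP => k; have [->|ki] := eqVneq k i.
    by apply/val_inj/eqP; rewrite /= -eqSS rj pi.
  by rewrite r_off // p_off.
apply: IH => //; [lia | apply: potential_lt_coord; first lia].
by rewrite r_off 1?eq_sym // pi.
Qed.

Lemma ker_T_vanish_above (phi : V -> R) : in_ker_T g t phi ->
  forall q, inD q -> (t < ssum q)%N -> Sg g phi q = 0.
Proof.
move=> kT; pose i := Ordinal d_gt0.
suff vanish k q : potential i q = k -> inD q -> (t < ssum q)%N -> Sg g phi q = 0.
  by move=> q; exact: vanish.
elim/ltn_ind: k q => k IH q qk Dq sq; subst k.
have /inDP/(_ i)/andP[_] := Dq; rewrite leq_eqVlt => /orP[/eqP qi|qi].
  exact: ker_T_vanish_top_face kT Dq sq qi.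
apply: (ker_T_vanish_interior_step kT Dq sq qi) => r Dr sr lt.
exact: IH _ lt r erefl Dr sr.
Qed.

Lemma ker_T_ker_T1 (phi : V -> R) : in_ker_T g t phi -> in_ker_T1 g t phi.
Proof.
move=> kT; split; first by case: kT.
by move=> x /andP[Dx /eqP sx]; apply: (ker_T_vanish_above kT Dx); rewrite sx.
Qed.

End Kernels.

Local Open Scope ring_scope.

Theorem lemma4p1 (R : realFieldType) (d n : nat) (g : pt d n -> pt d n -> R)
  (hd : (2 <= d)%N) (hn : (1 <= n)%N)
  (gsym : forall p q, g p q = g q p)
  (gpos : forall p q, adj p q -> 0 < g p q)
  (t : nat) (ht1 : (d - 1 <= t)%N) (ht2 : (t <= d * n - 1)%N) :
  forall phi : pt d n -> R, in_ker_T1 g t phi <-> in_ker_T g t phi.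
Proof.
have d_gt0 : (0 < d)%N by apply: leq_trans hd.
by move=> phi; split; [exact: ker_T1_ker_T | exact: ker_T_ker_T1].
Qed.
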